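(* Let $T$ be a c.n.u. contraction on $H$ and suppose $t:=T|_{\mathbb{K}^\perp}\in\mathbb{B}(\mathbb{K}^\perp,\mathbb{K}_*^\perp)$ satisfies $\|t\|<1$. Define $\Gamma'_\pm$ on $A_T^{\perp_s}$ by $$\Gamma'_+=(I-t^*t)^{-1/2}\Gamma_+-t^*(I-tt^* )^{-1/2}\Gamma_-,\qquad \Gamma'_-=t(I-t^*t)^{-1/2}\Gamma_+-(I-tt^* )^{-1/2}\Gamma_-.$$ Then the contractive Weyl function with respect to $(\mathbb{K}^\perp,\mathbb{K}_*^\perp,\Gamma'_+,\Gamma'_-)$ is $B'(\lambda)=-\Theta_T(\lambda)$; that is, for every $\lambda\in\mathbb{D}$ and every $a\in N_\lambda=\{(x,\lambda x):x\in H\}\cap A_T^{\perp_s}$, $$\Gamma'_-a=\big(T-\lambda\mathfrak{D}_*(I-\lambda T^* )^{-1}\mathfrak{D}\big)\big|_{\mathbb{K}^\perp}\,\Gamma'_+a.$$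
   Context: $H$ is an infinite-dimensional separable complex Hilbert space; $T\in\mathbb{B}(H)$, $\|T\|\le1$, is completely non-unitary (no nonzero invariant subspace on which $T$ is unitary). $\mathbb{K}=\ker(I-T^*T)$, $\mathbb{K}_*=\ker(I-TT^* )$; $T$ maps $\mathbb{K}^\perp$ into $\mathbb{K}_*^\perp$. $\mathfrak{D}=(I-T^*T)^{1/2}$, $\mathfrak{D}_*=(I-TT^* )^{1/2}$, and the Sz.-Nagy–Foias characteristic function is $\Theta_T(\lambda)=(-T+\lambda\mathfrak{D}_*(I-\lambda T^* )^{-1}\mathfrak{D})|_{\mathbb{K}^\perp}$, $\lambda\in\mathbb{D}$ (open unit disc). $\mathbb{H}=H\oplus_\perp H$ with $[(x_1,x_2),(y_1,y_2)]=i(x_1,y_1)_H-i(x_2,y_2)_H$; $S^{\perp_s}=\{a:[a,b]=0\ \forall b\in S\}$; $A_T=\{(x,Tx):x\in\mathbb{K}\}$. Every $a\in A_T^{\perp_s}$ decomposes uniquely as $a=(x_0,Tx_0)+(a_+,0)+(0,a_-)$ with $x_0\in\mathbb{K}$, $a_+\in\mathbb{K}^\perp$, $a_-\in\mathbb{K}_*^\perp$; the canonical boundary maps are $\Gamma_+a=a_+$, $\Gamma_-a=a_-$. *)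

From HB Require Import structures.
From mathcomp Require Import all_boot all_order all_algebra.
From mathcomp Require Import complex.
From mathcomp Require Import all_classical all_reals all_analysis.
Set Implicit Arguments. Unset Strict Implicit. Unset Printing Implicit Defensive.
Import Order.TTheory GRing.Theory Num.Theory.
Import numFieldNormedType.Exports.
Local Open Scope classical_set_scope.
Local Open Scope ring_scope.

Section HilbertDefs.
Variable R : realType.
Local Notation C := R[i].
Variable H : completeNormedModType C.

(* ip is an inner product (linear in the first argument, conjugate symmetric)
   inducing the norm of H:  |x|^2 = (x,x).  Together with completeness of H
   this makes H a complex Hilbert space. *)
Definition is_inner_product (ip : H -> H -> C) : Prop :=
  [/\ forall (a : C) (x y z : H), ip (a *: x + y) z = a * ip x z + ip y z,
      forall x y : H, ip y x = Num.conj (ip x y)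
    & forall x : H, `|x| ^+ 2 = ip x x].

Definition separable_space : Prop :=
  exists f : nat -> H, closure (range f) = setT.

Definition infinite_dimensional : Prop :=
  forall s : seq H, exists x : H,
    ~ exists c : 'I_(size s) -> C, x = \sum_(i < size s) c i *: s`_i.

Definition closed_subspace (M : set H) : Prop :=
  [/\ closed M, M 0,
      forall x y, M x -> M y -> M (x + y)
    & forall (a : C) x, M x -> M (a *: x)].

Definition orth (ip : H -> H -> C) (S : set H) : set H :=
  [set x | forall y, S y -> ip x y = 0].

Definition cnu (T : H -> H) : Prop :=
  forall M : set H, closed_subspace M ->
    (forall x, M x -> M (T x)) ->
    (forall x, M x -> `|T x| = `|x|) ->
    (forall y, M y -> exists2 x, M x & T x = y) ->
    M = [set 0].

Definition is_adjoint (ip : H -> H -> C) (B Bs : H -> H) : Prop :=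
  forall x y, ip (B x) y = ip x (Bs y).

Definition is_pos_sqrt_on (ip : H -> H -> C) (M : set H) (A S : H -> H) : Prop :=
  [/\ forall x, M x -> M (S x),
      forall x y, M x -> M y -> ip (S x) y = ip x (S y),
      forall x, M x -> 0 <= ip (S x) x
    & forall x, M x -> S (S x) = A x].

Definition is_inverse_on (M : set H) (S Si : H -> H) : Prop :=
  [/\ forall x, M x -> M (Si x),
      forall x, M x -> S (Si x) = x
    & forall x, M x -> Si (S x) = x].

End HilbertDefs.

(* Krein-space indefinite form on H (+) H *)
Definition sympl (R : realType) (H : completeNormedModType R[i])
  (ip : H -> H -> R[i]) (a b : H * H) : R[i] :=
  'i * ip a.1 b.1 - 'i * ip a.2 b.2.

From HB Require Import structures.
From mathcomp Require Import all_boot all_order all_algebra.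
From mathcomp Require Import complex.
From mathcomp Require Import all_classical all_reals all_analysis.
From mathcomp Require Import lra.
Import Order.TTheory GRing.Theory Num.Theory.
Import numFieldNormedType.Exports.
Local Open Scope classical_set_scope.
Local Open Scope ring_scope.

(* Write t' for the adjoint of t.  Since |t| < 1, the operators I - t't and
   I - tt' lie within distance < 1 of the identity, and so do their positive
   square roots.  For two such operators P and Q the Sylvester equation
   P Y + Y Q = 0 only has the solution Y = 0: iterating 2Y = (Y - PY) + Y(I - Q)
   shrinks |Y| geometrically.  Applied to Y = XQ - PX, this shows that square
   roots intertwine as soon as their squares do.  Hence (I - t't)^(1/2) is D on
   K^perp, (I - tt')^(1/2) is D_* on K_*^perp, and t' (I - tt')^(1/2) equals
   (I - t't)^(1/2) t'.  For a = (x, lam x) this gives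
   D Gamma'_+ a = Gamma_+ a - T' Gamma_- a = x - lam T' x and
   lam D_* x = D_* Gamma_- a = (I - tt')^(1/2) Gamma_- a, and the formula for
   Gamma'_- a follows by substitution. *)

Set Implicit Arguments. Unset Strict Implicit.

Lemma le0_geometric_bound (R : realType) (x c rho : R) :
  0 <= rho < 1 -> (forall n, x <= c * rho ^+ n) -> x <= 0.
Proof.
case/andP=> rho0 rho1 x_le; rewrite leNgt; apply/negP => x_gt0.
have rho_geo : geometric c rho n @[n --> \oo] --> 0.
  by apply: cvg_geometric; rewrite ger0_norm.
have [N _ /(_ N (leqnn N))] := cvgr_lt _ rho_geo _ x_gt0.
by rewrite /geometric /= ltNge x_le.
Qed.

Section InnerProduct.
Variables (R : realType) (H : completeNormedModType R[i]) (ip : H -> H -> R[i]).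
Hypothesis Hip : is_inner_product ip.

Lemma ipZDl a x y z : ip (a *: x + y) z = a * ip x z + ip y z.
Proof. by case: Hip. Qed.

Lemma ipC x y : ip y x = Num.conj (ip x y).
Proof. by case: Hip. Qed.

Lemma ipxx_eq0 x : ip x x = 0 -> x = 0.
Proof.
by case: Hip => _ _ <- /eqP; rewrite expf_eq0 /= normr_eq0 => /eqP.
Qed.

Lemma ipDl x y z : ip (x + y) z = ip x z + ip y z.
Proof. by rewrite -[x]scale1r ipZDl mul1r scale1r. Qed.

Lemma ip0l z : ip 0 z = 0.
Proof. by apply/(addrI (ip 0 z)); rewrite -ipDl !addr0. Qed.

Lemma ipZl a x z : ip (a *: x) z = a * ip x z.
Proof. by rewrite -[a *: x]addr0 ipZDl ip0l addr0. Qed.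

Lemma ipNl x z : ip (- x) z = - ip x z.
Proof. by rewrite -scaleN1r ipZl mulN1r. Qed.

Lemma ipBl x y z : ip (x - y) z = ip x z - ip y z.
Proof. by rewrite ipDl ipNl. Qed.

Lemma ipDr x y z : ip x (y + z) = ip x y + ip x z.
Proof. by rewrite [ip x (y + z)]ipC [ip x y]ipC [ip x z]ipC ipDl rmorphD. Qed.

Lemma ipZr a x y : ip x (a *: y) = Num.conj a * ip x y.
Proof. by rewrite [ip x (a *: y)]ipC [ip x y]ipC ipZl rmorphM. Qed.

Lemma ip0r x : ip x 0 = 0.
Proof. by rewrite ipC ip0l rmorph0. Qed.

Lemma ipNr x z : ip x (- z) = - ip x z.
Proof. by rewrite [ip x (- z)]ipC [ip x z]ipC ipNl rmorphN. Qed.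

Lemma ipBr x y z : ip x (y - z) = ip x y - ip x z.
Proof. by rewrite ipDr ipNr. Qed.

Lemma Re_ipC x y : complex.Re (ip y x) = complex.Re (ip x y).
Proof. by rewrite ipC; case: (ip x y). Qed.

Lemma Re_ge0 (c : R[i]) : 0 <= c -> 0 <= complex.Re c.
Proof. by rewrite lecE => /andP[]. Qed.

Definition sqnorm x : R := complex.Re (ip x x).

Lemma sqnorm_normE x : sqnorm x = complex.Re `|x| ^+ 2.
Proof.
rewrite /sqnorm; case: Hip => _ _ <-; have := ger0_Im (normr_ge0 x).
by case: `|x| => a b /= ->; rewrite mul0r subr0.
Qed.

Lemma sqnorm_ge0 x : 0 <= sqnorm x.
Proof. by rewrite sqnorm_normE sqr_ge0. Qed.

Lemma sqnorm_eq0 x : sqnorm x = 0 -> x = 0.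
Proof.
move=> /eqP; rewrite sqnorm_normE sqrf_eq0 => /eqP Re0; apply/normr0_eq0.
by have := ger0_Im (normr_ge0 x); case: `|x| Re0 => a b /= -> ->.
Qed.

Lemma sqnormN x : sqnorm (- x) = sqnorm x.
Proof. by rewrite /sqnorm ipNl ipNr opprK. Qed.

Lemma sqnormD x y :
  sqnorm (x + y) = sqnorm x + sqnorm y + 2 * complex.Re (ip x y).
Proof. rewrite /sqnorm ipDl !ipDr !raddfD /= [complex.Re (ip y x)]Re_ipC; lra. Qed.

Lemma sqnormB x y :
  sqnorm (x - y) = sqnorm x + sqnorm y - 2 * complex.Re (ip x y).
Proof. by rewrite sqnormD sqnormN ipNr raddfN mulrN. Qed.

Lemma sqnormD_le x y : sqnorm (x + y) <= 2 * sqnorm x + 2 * sqnorm y.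
Proof. have := sqnorm_ge0 (x - y); rewrite sqnormB sqnormD; lra. Qed.

Lemma self_orth_eq0 (M : set H) z :
  M z -> (forall w, M w -> ip w z = 0) -> z = 0.
Proof. by move=> Mz /(_ z Mz)/ipxx_eq0. Qed.

Definition linear_subspace (M : set H) :=
  M 0 /\ forall a x y, M x -> M y -> M (a *: x + y).

Lemma linear_subspaceT : linear_subspace setT.
Proof. by []. Qed.

Lemma linear_subspaceB M x y : linear_subspace M -> M x -> M y -> M (x - y).
Proof. by case=> _ hM Mx My; rewrite addrC -scaleN1r; apply: hM. Qed.

Lemma orth_linear_subspace S : linear_subspace (orth ip S).
Proof.
split=> [y _|a x y Sx Sy z Sz]; first exact: ip0l.
by rewrite ipZDl Sx // Sy // mulr0 addr0.
Qed.

Definition linear_on (M : set H) (f : H -> H) :=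
  forall a x y, M x -> M y -> f (a *: x + y) = a *: f x + f y.

Lemma linear_onT f : linear f -> linear_on setT f.
Proof. by move=> flin a x y _ _; apply: flin. Qed.

Lemma linear_onS (M M' : set H) f : M' `<=` M -> linear_on M f -> linear_on M' f.
Proof. by move=> sM fM a x y /sM Mx /sM My; apply: fM. Qed.

Section LinearOn.
Variables (M : set H) (f : H -> H).
Hypothesis flin : linear_on M f.

Lemma linear_on0 : M 0 -> f 0 = 0.
Proof.
move=> M0; apply/(addrI (f 0)).
by rewrite addr0 -{1}(scale1r (f 0)) -flin // scaler0 addr0.
Qed.

Lemma linear_onD x y : M x -> M y -> f (x + y) = f x + f y.
Proof. by move=> Mx My; rewrite -{1}[x]scale1r flin // scale1r. Qed.

Lemma linear_onB x y : M x -> M y -> f (x - y) = f x - f y.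
Proof. by move=> Mx My; rewrite addrC -scaleN1r flin // scaleN1r addrC. Qed.

Lemma linear_onZ a x : M 0 -> M x -> f (a *: x) = a *: f x.
Proof. by move=> M0 Mx; rewrite -[a *: x]addr0 flin // linear_on0 // addr0. Qed.

End LinearOn.

Lemma adjoint_on_linear (M : set H) (A B : H -> H) :
  linear_subspace M -> (forall x, M x -> M (A x)) -> (forall x, M x -> M (B x)) ->
  (forall x y, M x -> M y -> ip (A x) y = ip x (B y)) -> linear_on M B.
Proof.
move=> hM AM BM adj a x y Mx My; have Mz : M (a *: x + y) by apply: hM.2.
set d := B (a *: x + y) - (a *: B x + B y).
have Md : M d by apply: linear_subspaceB (BM _ Mz) (hM.2 _ _ _ (BM _ Mx) (BM _ My)).
suff /(self_orth_eq0 Md)/eqP : forall w, M w -> ip w d = 0 by rewrite subr_eq0 => /eqP.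
by move=> w Mw; rewrite ipBr ipDr ipZr -!adj // ipDr ipZr subrr.
Qed.

Lemma adjoint_linear T Ts : is_adjoint ip T Ts -> linear_on setT Ts.
Proof. by move=> adj; apply: adjoint_on_linear => // x y _ _; apply: adj. Qed.

Lemma adjoint_sym T Ts : is_adjoint ip T Ts -> is_adjoint ip Ts T.
Proof. by move=> adj x y; rewrite ipC -adj -ipC. Qed.

Lemma adjoint_sqnorm T Ts x :
  is_adjoint ip T Ts -> complex.Re (ip (Ts (T x)) x) = sqnorm (T x).
Proof. by move=> adj; rewrite Re_ipC -adj. Qed.

Lemma pos_sqrt_linear M A S :
  linear_subspace M -> is_pos_sqrt_on ip M A S -> linear_on M S.
Proof. by move=> hM [SM Ssa _ _]; apply: (adjoint_on_linear (A := S)). Qed.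

Lemma pos_sqrt_sqnorm M A S u :
  is_pos_sqrt_on ip M A S -> M u -> sqnorm (S u) = complex.Re (ip (A u) u).
Proof. by case=> SM Ssa _ S2 Mu; rewrite /sqnorm -Ssa ?S2 //; apply: SM. Qed.

Lemma pos_sqrt_ker M A S u : is_pos_sqrt_on ip M A S -> M u -> A u = 0 -> S u = 0.
Proof.
by move=> hS Mu Au; apply: sqnorm_eq0; rewrite (pos_sqrt_sqnorm hS) // Au ip0l raddf0.
Qed.

Lemma pos_sqrt_orth_ker A S : is_pos_sqrt_on ip setT A S ->
  is_pos_sqrt_on ip (orth ip [set x | A x = 0]) A S.
Proof.
move=> hS; case: (hS) => _ Ssa Spos S2; split=> [x Kx y Ay|x y _ _|x _|x _].
- by rewrite Ssa // (pos_sqrt_ker hS) // ip0r.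
- exact: Ssa.
- exact: Spos.
- exact: S2.
Qed.

Lemma pos_sqrt_ext M A B S : (forall x, M x -> A x = B x) ->
  is_pos_sqrt_on ip M A S -> is_pos_sqrt_on ip M B S.
Proof. by move=> eqAB [SM Ssa Spos S2]; split=> // x Mx; rewrite S2 ?eqAB. Qed.

(* For 0 <= S <= I one has |S u|^2 <= Re (S u, u); positivity of S at
   u - S u yields it. *)
Lemma pos_contraction_sqnorm_sub M A S :
  linear_subspace M -> is_pos_sqrt_on ip M A S ->
  (forall u, M u -> sqnorm (S u) <= sqnorm u) ->
  forall u, M u -> sqnorm (u - S u) <= sqnorm u - sqnorm (S u).
Proof.
move=> hM hS Scontr u Mu; have [SM Ssa Spos _] := hS.
set z := S u; have Mz : M z := SM u Mu.
have Sz_le : complex.Re (ip (S z) z) <= sqnorm z.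
  have := sqnorm_ge0 (z - S z); rewrite sqnormB Re_ipC.
  by have := Scontr z Mz; lra.
have pos_uz := Re_ge0 (Spos _ (linear_subspaceB hM Mu Mz)).
rewrite (linear_onB (pos_sqrt_linear hM hS)) // -/z in pos_uz.
rewrite ipBl !ipBr !raddfB /= [ip (S z) u]Ssa // -/z -/(sqnorm z) in pos_uz.
by rewrite sqnormB Re_ipC; lra.
Qed.

Definition near_identity (M : set H) (P : H -> H) (rho : R) :=
  forall u, M u -> sqnorm (u - P u) <= rho * sqnorm u.

Lemma pos_sqrt_near_identity M A S rho :
  linear_subspace M -> is_pos_sqrt_on ip M (fun x => x - A x) S ->
  (forall u, M u -> 0 <= complex.Re (ip (A u) u) <= rho * sqnorm u) ->
  near_identity M S rho.
Proof.
move=> hM hS A_bd.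
have SE u : M u -> sqnorm (S u) = sqnorm u - complex.Re (ip (A u) u).
  by move=> Mu; rewrite (pos_sqrt_sqnorm hS) // ipBl raddfB.
move=> u Mu; apply: le_trans (pos_contraction_sqnorm_sub hM hS _ Mu) _.
  by move=> v Mv; rewrite SE //; have /andP[] := A_bd v Mv; lra.
by rewrite SE //; have /andP[] := A_bd u Mu; lra.
Qed.

Lemma near_identity_sqnorm_le M P rho u :
  near_identity M P rho -> rho <= 1 -> M u -> sqnorm (P u) <= 4 * sqnorm u.
Proof.
move=> hP rho1 Mu; have := sqnormD_le u (- (u - P u)).
rewrite subKr sqnormN; have := hP u Mu; have := sqnorm_ge0 u; nra.
Qed.

Section Sylvester.
Variables (M1 M2 : set H) (P Q Y : H -> H) (rho B : R).
Hypotheses (rho01 : 0 <= rho < 1) (B0 : 0 <= B).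
Hypotheses (hP : near_identity M1 P rho) (hQ : near_identity M2 Q rho).
Hypotheses (M2B : forall u v, M2 u -> M2 v -> M2 (u - v))
  (QM : forall v, M2 v -> M2 (Q v)) (YM : forall v, M2 v -> M1 (Y v)).
Hypotheses (YB : forall u v, M2 u -> M2 v -> Y (u - v) = Y u - Y v)
  (Y_bd : forall v, M2 v -> sqnorm (Y v) <= B * sqnorm v)
  (Y_sylvester : forall v, M2 v -> P (Y v) + Y (Q v) = 0).

Lemma sylvester_step v : M2 v -> sqnorm (Y v) <= sqnorm (Y (v - Q v)).
Proof.
move=> Mv; have YQ : Y (Q v) = - P (Y v).
  by apply/eqP; rewrite -addr_eq0 addrC Y_sylvester.
have YvYv : Y v - P (Y v) + Y (v - Q v) = Y v + Y v.
  by rewrite (YB Mv (QM Mv)) YQ opprK addrACA addNr addr0.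
have := sqnormD_le (Y v - P (Y v)) (Y (v - Q v)).
rewrite YvYv sqnormD -/(sqnorm (Y v)).
have := hP (YM Mv); have := sqnorm_ge0 (Y v); case/andP: rho01; nra.
Qed.

Lemma sylvester_eq0 v : M2 v -> Y v = 0.
Proof.
have Y_geo n u : M2 u -> sqnorm (Y u) <= B * rho ^+ n * sqnorm u.
  elim: n u => [|n IH] u Mu; first by rewrite expr0 mulr1 Y_bd.
  apply: le_trans (sylvester_step Mu) _; apply: le_trans (IH _ (M2B Mu (QM Mu))) _.
  rewrite exprS [rho * _]mulrC -!mulrA; apply: ler_wpM2l => //.
  by case/andP: rho01 => rho0 _; apply: ler_wpM2l; [exact: exprn_ge0 | exact: hQ].
move=> Mv; apply: sqnorm_eq0; apply/le_anti; rewrite sqnorm_ge0 andbT.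
by apply: (le0_geometric_bound (c := B * sqnorm v) rho01) => n; rewrite mulrAC Y_geo.
Qed.

End Sylvester.

Section Intertwining.
Variables (M1 M2 : set H) (A1 A2 P Q X : H -> H) (rho : R).
Hypotheses (rho01 : 0 <= rho < 1) (hM1 : linear_subspace M1) (hM2 : linear_subspace M2).
Hypotheses (hP : is_pos_sqrt_on ip M1 (fun x => x - A1 x) P)
  (hQ : is_pos_sqrt_on ip M2 (fun x => x - A2 x) Q).
Hypotheses
  (A1_bd : forall u, M1 u -> 0 <= complex.Re (ip (A1 u) u) <= rho * sqnorm u)
  (A2_bd : forall u, M2 u -> 0 <= complex.Re (ip (A2 u) u) <= rho * sqnorm u).
Hypotheses (XM : forall v, M2 v -> M1 (X v)) (Xlin : linear_on M2 X)
  (Xcontr : forall v, M2 v -> sqnorm (X v) <= sqnorm v)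
  (X_sq : forall v, M2 v -> X (Q (Q v)) = P (P (X v))).

Lemma pos_sqrt_intertwine v : M2 v -> X (Q v) = P (X v).
Proof.
have nP := pos_sqrt_near_identity hM1 hP A1_bd.
have nQ := pos_sqrt_near_identity hM2 hQ A2_bd.
have [[PM _ _ _] [QM _ _ _]] := (hP, hQ).
have Plin := pos_sqrt_linear hM1 hP; have Qlin := pos_sqrt_linear hM2 hQ.
have rho1 : rho <= 1 by case/andP: rho01 => _ /ltW.
move=> Mv; apply/subr0_eq; move: v Mv.
apply: (sylvester_eq0 (B := 16) rho01 _ nP nQ (fun u v => linear_subspaceB hM2) QM).
- by rewrite ler0n.
- by move=> v Mv; apply: linear_subspaceB hM1 (XM (QM _ Mv)) (PM _ (XM Mv)).
- move=> u v Mu Mv /=; have [XMu XMv] := (XM Mu, XM Mv).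
  have [QMu QMv] := (QM _ Mu, QM _ Mv).
  rewrite (linear_onB Qlin) // (linear_onB Xlin) //.
  by rewrite (linear_onB Xlin) // (linear_onB Plin) // !opprD !opprK addrACA.
- move=> v Mv /=; have := sqnormD_le (X (Q v)) (- P (X v)); rewrite sqnormN.
  have := Xcontr (QM _ Mv); have := near_identity_sqnorm_le nQ rho1 Mv.
  have := near_identity_sqnorm_le nP rho1 (XM Mv); have := Xcontr Mv; lra.
- move=> v Mv /=; have [XQM PXM] := (XM (QM _ Mv), PM _ (XM Mv)).
  by rewrite (linear_onB Plin) // X_sq // addrA subrK subrr.
Qed.

End Intertwining.

Lemma pos_sqrt_unique M A P Q rho :
  0 <= rho < 1 -> linear_subspace M ->
  is_pos_sqrt_on ip M (fun x => x - A x) P -> is_pos_sqrt_on ip M (fun x => x - A x) Q ->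
  (forall u, M u -> 0 <= complex.Re (ip (A u) u) <= rho * sqnorm u) ->
  forall v, M v -> Q v = P v.
Proof.
move=> rho01 hM hP hQ A_bd.
apply: (pos_sqrt_intertwine (X := id) rho01 hM hM hP hQ A_bd A_bd) => //.
by move=> v Mv; case: hP => _ _ _ -> //; case: hQ => _ _ _ ->.
Qed.

Lemma ker_defect_map T Ts u : linear_on setT T ->
  u - Ts (T u) = 0 -> T u - T (Ts (T u)) = 0.
Proof. by move=> Tl Ku; rewrite -(linear_onB Tl) // Ku (linear_on0 Tl). Qed.

Lemma orth_ker_defect_map T Ts : linear_on setT Ts -> is_adjoint ip T Ts ->
  forall u, orth ip [set x | x - Ts (T x) = 0] u -> orth ip [set y | y - T (Ts y) = 0] (T u).
Proof. by move=> Tsl adj u Ku y Ky; rewrite adj; apply: Ku; exact: (ker_defect_map Tsl Ky). Qed.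

Lemma adjoint_restrict_eq (M N : set H) (T Ts ts : H -> H) :
  linear_subspace M -> is_adjoint ip T Ts ->
  (forall y, N y -> M (ts y)) -> (forall y, N y -> M (Ts y)) ->
  (forall x y, M x -> N y -> ip (T x) y = ip x (ts y)) ->
  forall y, N y -> ts y = Ts y.
Proof.
move=> hM adj tsM TsM ts_adj y Ny; apply/subr0_eq.
apply: (self_orth_eq0 (linear_subspaceB hM (tsM _ Ny) (TsM _ Ny))) => w Mw.
by rewrite ipBr -ts_adj // adj subrr.
Qed.

Lemma sqnorm_le_of_norm_le (M : set H) (f : H -> H) (k : R[i]) : k < 1 ->
  (forall x, M x -> `|f x| <= k * `|x|) ->
  exists2 kap : R, 0 <= kap < 1 & forall x, M x -> sqnorm (f x) <= kap * sqnorm x.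
Proof.
case: k => a b; rewrite ltcE => /andP[/eqP /= <- a1] f_le.
have Re_f_le x : M x -> complex.Re `|f x| <= a * complex.Re `|x|.
  move=> Mx; have := f_le x Mx; rewrite lecE => /andP[_].
  by case: `|x| => c d /=; rewrite mul0r subr0.
have [m /and3P[m0 m1 f_le_m]] : exists m, [&& 0 <= m, m < 1 &
    `[< forall x, M x -> complex.Re `|f x| <= m * complex.Re `|x| >]].
  case: (lerP 0 a) => a0; [exists a | exists 0]; rewrite ?a0 ?a1 ?lexx ?ltr01 /=.
    by apply/asboolP.
  apply/asboolP => x Mx; rewrite mul0r; apply: le_trans (Re_f_le x Mx) _.
  exact: mulr_le0_ge0 (ltW a0) (Re_ge0 (normr_ge0 x)).
exists (m ^+ 2); first by apply/andP; split; nra.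
move=> x Mx; rewrite !sqnorm_normE; have := (asboolW f_le_m) x Mx.
by have := Re_ge0 (normr_ge0 (f x)); have := Re_ge0 (normr_ge0 x); nra.
Qed.

(* Without Cauchy-Schwarz one only gets (2 - kap) |Ts y|^2 <= |y|^2,
   whence the weaker constant (1 + kap) / 2 < 1. *)
Lemma adjoint_sqnorm_le (M N : set H) T Ts kap :
  is_adjoint ip T Ts -> (forall y, N y -> M (Ts y)) -> 0 <= kap <= 1 ->
  (forall x, M x -> sqnorm (T x) <= kap * sqnorm x) ->
  forall y, N y -> sqnorm (Ts y) <= (1 + kap) / 2 * sqnorm y.
Proof.
move=> adj TsM /andP[kap0 kap1] T_le y Ny.
have Ts_sq : sqnorm (Ts y) = complex.Re (ip (T (Ts y)) y) by rewrite adj.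
have := sqnorm_ge0 (T (Ts y) - y); rewrite sqnormB -Ts_sq.
have := T_le _ (TsM _ Ny); have := sqnorm_ge0 (Ts y); have := sqnorm_ge0 y.
set X := sqnorm (Ts y); set Y := sqnorm y => Y0 X0 TX Ts_le.
have e1 : (2 - kap) * X <= Y by lra.
have e2 : (1 + kap) * ((2 - kap) * X) <= (1 + kap) * Y by apply: ler_wpM2l => //; lra.
have e3 : 0 <= kap * (1 - kap) * X by rewrite !mulr_ge0 // subr_ge0.
lra.
Qed.

Section StrictContraction.
Variables (T Ts : H -> H) (kap : R).
Hypotheses (Tlin : linear_on setT T) (HTs : is_adjoint ip T Ts) (kap01 : 0 <= kap < 1).
Local Notation Kp := (orth ip [set x | x - Ts (T x) = 0]).
Local Notation Ksp := (orth ip [set y | y - T (Ts y) = 0]).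
Hypothesis T_strict : forall x, Kp x -> sqnorm (T x) <= kap * sqnorm x.

Let rho := (1 + kap) / 2.

Let rho01 : 0 <= rho < 1.
Proof. by case/andP: kap01 => kap0 kap1; apply/andP; split; rewrite /rho; lra. Qed.

Let Tsl : linear_on setT Ts := adjoint_linear HTs.

Let TsKp : forall y, Ksp y -> Kp (Ts y) := orth_ker_defect_map Tlin (adjoint_sym HTs).

Let Ts_bound y : Ksp y -> sqnorm (Ts y) <= rho * sqnorm y.
Proof.
move=> Ky; rewrite /rho; apply: (adjoint_sqnorm_le HTs TsKp _ T_strict Ky).
by case/andP: kap01 => -> /ltW.
Qed.

Let defect_bound u : Kp u -> 0 <= complex.Re (ip (Ts (T u)) u) <= rho * sqnorm u.
Proof.
move=> Ku; rewrite (adjoint_sqnorm _ HTs) sqnorm_ge0 /=; apply: le_trans (T_strict Ku) _.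
by apply: ler_wpM2r; [exact: sqnorm_ge0 | rewrite /rho; case/andP: kap01 => _; lra].
Qed.

Let defect_adj_bound u : Ksp u -> 0 <= complex.Re (ip (T (Ts u)) u) <= rho * sqnorm u.
Proof. by move=> Ku; rewrite (adjoint_sqnorm _ (adjoint_sym HTs)) sqnorm_ge0 Ts_bound. Qed.

Lemma defect_sqrt_unique D P :
  is_pos_sqrt_on ip setT (fun x => x - Ts (T x)) D ->
  is_pos_sqrt_on ip Kp (fun x => x - Ts (T x)) P -> forall v, Kp v -> P v = D v.
Proof.
move=> hD hP; apply: (pos_sqrt_unique rho01 (orth_linear_subspace _) _ hP defect_bound).
exact: (pos_sqrt_orth_ker hD).
Qed.

Lemma defect_adj_sqrt_unique Ds Q :
  is_pos_sqrt_on ip setT (fun y => y - T (Ts y)) Ds ->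
  is_pos_sqrt_on ip Ksp (fun y => y - T (Ts y)) Q -> forall v, Ksp v -> Q v = Ds v.
Proof.
move=> hDs hQ; apply: (pos_sqrt_unique rho01 (orth_linear_subspace _) _ hQ defect_adj_bound).
exact: (pos_sqrt_orth_ker hDs).
Qed.

Lemma defect_sqrt_intertwine P Q :
  is_pos_sqrt_on ip Kp (fun x => x - Ts (T x)) P ->
  is_pos_sqrt_on ip Ksp (fun y => y - T (Ts y)) Q -> forall v, Ksp v -> Ts (Q v) = P (Ts v).
Proof.
move=> hP hQ; apply: (pos_sqrt_intertwine rho01 (orth_linear_subspace _)
  (orth_linear_subspace _) hP hQ defect_bound defect_adj_bound TsKp).
- exact: linear_onS Tsl.
- move=> v Kv; apply: le_trans (Ts_bound Kv) _; rewrite ler_piMl ?sqnorm_ge0 //.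
  by case/andP: rho01 => _ /ltW.
- move=> v Kv; case: hP => _ _ _ -> ; last exact: TsKp.
  by case: hQ => _ _ _ -> //; rewrite (linear_onB Tsl).
Qed.

End StrictContraction.

End InnerProduct.

Arguments linear_subspaceT {R H}.

Theorem proposition4p8
  (R : realType) (H : completeNormedModType R[i]) (ip : H -> H -> R[i])
  (T Ts D Ds ts Sp Spi Sm Smi : H -> H)
  (Hip : is_inner_product ip)
  (Hsep : separable_space H) (Hinf : infinite_dimensional H)
  (* T a completely non-unitary contraction *)
  (Tlin : linear T) (Tcontr : forall x, `|T x| <= `|x|) (Tcnu : cnu T)
  (* Ts = adjoint of T *)
  (HTs : is_adjoint ip T Ts)
  (* D = (I - Tadj T)^{1/2},  D_* = (I - T Tadj)^{1/2} *)
  (HD : is_pos_sqrt_on ip setT (fun x => x - Ts (T x)) D)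
  (HDs : is_pos_sqrt_on ip setT (fun x => x - T (Ts x)) Ds) :
  let K := [set x : H | x - Ts (T x) = 0] in
  let Ks := [set x : H | x - T (Ts x) = 0] in
  let Kp := orth ip K in
  let Ksp := orth ip Ks in
  (* t := T|_{K^perp} : K^perp -> K_*^perp has norm < 1 *)
  (exists2 k : R[i], k < 1 & forall x, Kp x -> `|T x| <= k * `|x|) ->
  (* ts = adjoint of t : K_*^perp -> K^perp *)
  (forall y, Ksp y -> Kp (ts y)) ->
  (forall x y, Kp x -> Ksp y -> ip (T x) y = ip x (ts y)) ->
  (* Spi = (I - tadj t)^{-1/2} on K^perp,  Smi = (I - t tadj)^{-1/2} on K_*^perp *)
  is_pos_sqrt_on ip Kp (fun x => x - ts (T x)) Sp -> is_inverse_on Kp Sp Spi ->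
  is_pos_sqrt_on ip Ksp (fun y => y - T (ts y)) Sm -> is_inverse_on Ksp Sm Smi ->
  forall (lam : R[i]) (Rl : H -> H), `|lam| < 1 ->
  (* Rl = (I - lam Tadj)^{-1} *)
  (forall x, Rl (x - lam *: Ts x) = x) ->
  (forall y, Rl y - lam *: Ts (Rl y) = y) ->
  forall a : H * H,
  (* a in N_lam *)
  (exists x : H, a = (x, lam *: x)) ->
  (* a in A_T^{[perp]} *)
  (forall k, K k -> sympl ip a (k, T k) = 0) ->
  (* a = (x0, T x0) + (ap, 0) + (0, am):  ap = Gamma_+ a, am = Gamma_- a *)
  forall x0 ap am : H, K x0 -> Kp ap -> Ksp am ->
  a = (x0 + ap, T x0 + am) ->
  let Gp' := Spi ap - ts (Smi am) in
  let Gm' := T (Spi ap) - Smi am in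
  Gm' = T Gp' - lam *: Ds (Rl (D Gp')).
Proof.
(* The decomposition of a already places it in A_T^[perp]. *)
move=> K Ks Kp Ksp [k k_lt1 T_le] tsKp ts_adj Sp_sqrt [SpiKp SpSpi _]
  Sm_sqrt [SmiKsp SmSmi _] lam Rl _ Rl_inv _ _ [x ->] _ x0 ap am Kx0 Kap Kam
  [x_def lamx_def] Gp' Gm'.
have Tl := linear_onT Tlin; have Tsl := adjoint_linear Hip HTs.
have Dl := pos_sqrt_linear Hip linear_subspaceT HD.
have Dsl := pos_sqrt_linear Hip linear_subspaceT HDs.
have TKsp : forall u, Kp u -> Ksp (T u) := orth_ker_defect_map Tsl HTs.
have TsKp : forall y, Ksp y -> Kp (Ts y) := orth_ker_defect_map Tl (adjoint_sym Hip HTs).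
have ts_Ts : forall y, Ksp y -> ts y = Ts y :=
  adjoint_restrict_eq Hip (orth_linear_subspace Hip _) HTs tsKp TsKp ts_adj.
have [kap kap01 T_strict] := sqnorm_le_of_norm_le Hip k_lt1 T_le.
have Sp_sqrt' : is_pos_sqrt_on ip Kp (fun x => x - Ts (T x)) Sp.
  by apply: pos_sqrt_ext Sp_sqrt => u Ku; rewrite ts_Ts //; apply: TKsp.
have Sm_sqrt' : is_pos_sqrt_on ip Ksp (fun y => y - T (Ts y)) Sm.
  by apply: pos_sqrt_ext Sm_sqrt => u Ku; rewrite ts_Ts.
have Sp_D : forall v, Kp v -> Sp v = D v :=
  defect_sqrt_unique Hip HTs kap01 T_strict HD Sp_sqrt'.
have Sm_Ds : forall v, Ksp v -> Sm v = Ds v :=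
  defect_adj_sqrt_unique Hip Tl HTs kap01 T_strict HDs Sm_sqrt'.
have Ts_Sm : forall v, Ksp v -> Ts (Sm v) = Sp (Ts v) :=
  defect_sqrt_intertwine Hip Tl HTs kap01 T_strict Sp_sqrt' Sm_sqrt'.
have [w_Ksp s_Kp] := (SmiKsp _ Kam, SpiKp _ Kap).
have Ts_w_Kp := TsKp _ w_Ksp.
rewrite /Gm' /Gp' ts_Ts //; set w := Smi am; set s := Spi ap.
have D_Gp' : D (s - Ts w) = x - lam *: Ts x.
  rewrite (linear_onB Dl) // -!Sp_D // -Ts_Sm // SpSpi // SmSmi //.
  rewrite -(linear_onZ Tsl) // lamx_def (linear_onD Tsl) // -(subr0_eq Kx0) x_def.
  by rewrite opprD addrACA subrr add0r.
have lam_Ds_x : lam *: Ds x = w - T (Ts w).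
  have [SmKsp _ _ Sm2] := Sm_sqrt'.
  rewrite -(linear_onZ Dsl) // lamx_def (linear_onD Dsl) //.
  rewrite (pos_sqrt_ker Hip HDs) //; last exact: ker_defect_map Tl Kx0.
  rewrite add0r -(SmSmi _ Kam) -/w -Sm_Ds; [exact: Sm2 | exact: SmKsp].
by rewrite D_Gp' Rl_inv lam_Ds_x (linear_onB Tl) // opprB addrA subrK.
Qed.
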